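(* A metric space $X$ has asymptotic property $C$ if and only if $\operatorname{trasdim} X<\infty$.
   Context: A family $\mathcal A$ of subsets of a metric space is uniformly bounded if there is $C>0$ with $\operatorname{diam}A\le C$ for all $A\in\mathcal A$; it is $r$-disjoint if $d(A_1,A_2)\ge r$ for all distinct $A_1,A_2\in\mathcal A$. For a set $L$, $\mathrm{Fin}\,L$ is the collection of finite nonempty subsets of $L$. For $M\subset \mathrm{Fin}\,L$ and $\sigma\in\{\emptyset\}\cup\mathrm{Fin}\,L$, $M^\sigma=\{\tau\in\mathrm{Fin}\,L:\sigma\cup\tau\in M,\ \sigma\cap\tau=\emptyset\}$, and $M^a=M^{\{a\}}$. The ordinal $\operatorname{Ord}M$ is defined inductively: $\operatorname{Ord}M=0$ iff $M=\emptyset$; $\operatorname{Ord}M\le\alpha$ iff $\operatorname{Ord}M^a<\alpha$ for every $a\in L$; $\operatorname{Ord}M=\alpha$ iff $\operatorname{Ord}M\le\alpha$ and not $\operatorname{Ord}M<\alpha$; $\operatorname{Ord}M=\infty$ iff $\operatorname{Ord} M\le\alpha$ for no ordinal $\alpha$. For a metric space $(X,d)$, $A(X,d)$ is the set of $\sigma\in\mathrm{Fin}\,\mathbb N$ such that there do NOT exist uniformly bounded families $\mathcal V_i$, $i\in\sigma$, with $\bigcup_{i\in\sigma}\mathcal V_i$ covering $X$ and each $\mathcal V_i$ being $i$-disjoint. Define $\operatorname{trasdim}X=\operatorname{Ord}A(X,d)$, except $\operatorname{trasdim}X=-1$ iff $X$ is bounded. $X$ has asymptotic property $C$ if for every sequence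 of natural numbers $n_1<n_2<\cdots$ there exist $n\in\mathbb N$ and uniformly bounded families $\mathcal U_1,\dots,\mathcal U_n$ such that $\bigcup_{i=1}^n\mathcal U_i$ covers $X$ and each $\mathcal U_i$ is $n_i$-disjoint. *)

From Stdlib Require Import Reals.
From mathcomp Require Import all_boot.
From mathcomp Require Import finmap.

Set Implicit Arguments.
Unset Strict Implicit.
Unset Printing Implicit Defensive.

Local Open Scope fset_scope.

Definition is_metric (X : Type) (d : X -> X -> R) : Prop :=
  (forall x y, Rle 0 (d x y)) /\
  (forall x y, d x y = R0 <-> x = y) /\
  (forall x y, d x y = d y x) /\
  (forall x y z, Rle (d x z) (Rplus (d x y) (d y z))).

Definition bounded_space (X : Type) (d : X -> X -> R) : Prop :=
  exists C : R, forall x y : X, Rle (d x y) C.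

Definition family (X : Type) := (X -> Prop) -> Prop.

Definition uniformly_bounded (X : Type) (d : X -> X -> R) (F : family X) : Prop :=
  exists C : R, Rlt 0 C /\
    forall A, F A -> forall x y, A x -> A y -> Rle (d x y) C.

(** r-disjoint: d(A1,A2) >= r for distinct members, where
    d(A1,A2) = inf { d x y | x in A1, y in A2 } *)
Definition r_disjoint (X : Type) (d : X -> X -> R) (r : R) (F : family X) : Prop :=
  forall A1 A2, F A1 -> F A2 -> A1 <> A2 ->
    forall x y, A1 x -> A2 y -> Rle r (d x y).

Definition covers (X : Type) (F : family X) : Prop :=
  forall x : X, exists A, F A /\ A x.

(** L = N = {1,2,3,...}; Fin N = finite nonempty subsets of N. *)
Definition inL (a : nat) : bool := (0 < a)%N.

Definition FinN (s : {fset nat}) : Prop :=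
  s != fset0 /\ forall a, a \in s -> inL a.

Definition Mpow (M : {fset nat} -> Prop) (sigma : {fset nat}) : {fset nat} -> Prop :=
  fun tau => FinN tau /\ M (sigma `|` tau) /\ sigma `&` tau = fset0.

Definition Mpt (M : {fset nat} -> Prop) (a : nat) := Mpow M [fset a].

(** [ord_finite M] : Ord M < infinity, i.e. Ord M <= alpha for some ordinal
    alpha.  Since Ord is defined by transfinite recursion
    (Ord M = 0 iff M empty; Ord M <= alpha iff Ord M^a < alpha for all a in L),
    the existence of such an alpha is exactly the inductive (well-founded)
    predicate below. *)
Inductive ord_finite (M : {fset nat} -> Prop) : Prop :=
  | ord_finite_empty : (forall s, ~ M s) -> ord_finite M
  | ord_finite_step : (forall a, inL a -> ord_finite (Mpt M a)) -> ord_finite M.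

Definition Aset (X : Type) (d : X -> X -> R) : {fset nat} -> Prop :=
  fun sigma => FinN sigma /\
    ~ (exists V : nat -> family X,
          (forall i, i \in sigma ->
             uniformly_bounded d (V i) /\ r_disjoint d (INR i) (V i)) /\
          covers (fun A => exists i, i \in sigma /\ V i A)).

(** trasdim X < infinity  (trasdim X = -1 when X is bounded, else Ord A(X,d)) *)
Definition trasdim_finite (X : Type) (d : X -> X -> R) : Prop :=
  bounded_space d \/ ord_finite (Aset d).

(** asymptotic property C; the sequence n_1 < n_2 < ... is s 0 < s 1 < ...,
    and U_1,...,U_n are U 0, ..., U (n-1). *)
Definition asymptotic_property_C (X : Type) (d : X -> X -> R) : Prop :=
  forall s : nat -> nat, (0 < s 0)%N -> (forall i, (s i < s i.+1)%N) ->
    exists (n : nat) (U : nat -> family X),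
      (forall i, (i < n)%N ->
         uniformly_bounded d (U i) /\ r_disjoint d (INR (s i)) (U i)) /\
      covers (fun A => exists i, (i < n)%N /\ U i A).

(** If Ord A(X) is finite, induction along the well-founded definition of Ord
    shows that every strictly increasing sequence n_1 < n_2 < ... has an initial
    segment {n_1, ..., n_k} outside A(X); a cover witnessing this is what
    property C asks for.  Conversely, if Ord A(X) is infinite, one chooses
    a_1, a_2, ... with Ord A(X)^{a_1, ..., a_k} infinite for every k.  These
    a_i are distinct, and property C for the partial sums
    n_k = a_1 + ... + a_k >= a_k yields a cover showing that {a_1, ..., a_k} is
    not in A(X), although A(X)^{a_1, ..., a_k} is nonempty. *)

From Pilot Require Import Defs.
From Stdlib Require Import Reals Classical ClassicalEpsilon.
From mathcomp Require Import all_boot finmap.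

Set Implicit Arguments.
Unset Strict Implicit.
Unset Printing Implicit Defensive.
Local Open Scope fset_scope.

Section DisjointCovers.
Variables (X : Type) (d : X -> X -> R).

(* Both [Aset] (with [P] membership in sigma and [r = id]) and property C (with
   [P i] meaning [i < n] and [r = s]) unfold to instances of this notion. *)
Definition disjoint_cover (P : nat -> Prop) (r : nat -> nat)
    (U : nat -> Defs.family X) : Prop :=
  (forall i, P i ->
     uniformly_bounded d (U i) /\ r_disjoint d (INR (r i)) (U i)) /\
  covers (fun A => exists i, P i /\ U i A).

Lemma uniformly_bounded_sub (F G : Defs.family X) :
  (forall A, G A -> F A) -> uniformly_bounded d F -> uniformly_bounded d G.
Proof. by move=> sGF [C [C_gt0 bdF]]; exists C; split=> // A /sGF; apply: bdF. Qed.

Lemma uniformly_bounded0 : uniformly_bounded d (fun _ => False).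
Proof. by exists R1; split=> //; apply: Rlt_0_1. Qed.

Lemma r_disjoint_sub (r : R) (F G : Defs.family X) :
  (forall A, G A -> F A) -> r_disjoint d r F -> r_disjoint d r G.
Proof. by move=> sGF disjF A1 A2 /sGF F1 /sGF F2; apply: disjF. Qed.

Lemma r_disjoint_le (r r' : R) (F : Defs.family X) :
  Rle r' r -> r_disjoint d r F -> r_disjoint d r' F.
Proof.
move=> le_r'r disjF A1 A2 F1 F2 neqA x y A1x A2y.
exact: Rle_trans le_r'r (disjF _ _ F1 F2 neqA x y A1x A2y).
Qed.

Lemma disjoint_cover_widen (P Q : nat -> Prop) r U :
  (forall i, P i -> Q i) -> disjoint_cover P r U ->
  disjoint_cover Q r (fun i A => P i /\ U i A).
Proof.
move=> sPQ [famU covU]; split=> [i _|x].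
- have [Pi|nPi] := classic (P i).
    have [bdU disjU] := famU i Pi.
    by split; [apply: uniformly_bounded_sub bdU | apply: r_disjoint_sub disjU];
      move=> A [].
  split; first by apply: uniformly_bounded_sub uniformly_bounded0 => A [].
  by move=> A1 A2 [].
- have [A [[i [Pi UiA]] Ax]] := covU x.
  by exists A; split=> //; exists i; split; [apply: sPQ | split].
Qed.

Lemma disjoint_cover_comap (P Q : nat -> Prop) r r' (f : nat -> nat) U :
  (forall i, Q i -> P (f i)) -> (forall j, P j -> exists2 i, Q i & f i = j) ->
  (forall i, Q i -> (r' i <= r (f i))%N) ->
  disjoint_cover P r U -> disjoint_cover Q r' (fun i => U (f i)).
Proof.
move=> QP PQ le_r' [famU covU]; split=> [i Qi|x].
- have [bdU disjU] := famU _ (QP i Qi); split=> //.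
  by apply: r_disjoint_le disjU; apply/le_INR/leP/le_r'.
- have [A [[j [Pj UjA]] Ax]] := covU x; have [i Qi fij] := PQ j Pj.
  by exists A; split=> //; exists i; rewrite fij.
Qed.

Lemma disjoint_cover_map (P : nat -> Prop) r r' (f : nat -> nat) U :
  injective f -> (forall i, P i -> (r' (f i) <= r i)%N) ->
  disjoint_cover P r U ->
  disjoint_cover (fun j => exists2 i, P i & f i = j) r'
    (fun j A => exists i, [/\ P i, f i = j & U i A]).
Proof.
move=> f_inj le_r' [famU covU]; split=> [_ [i Pi <-]|x].
- have sUi : forall A, (exists k, [/\ P k, f k = f i & U k A]) -> U i A.
    by move=> A [k [_ /f_inj -> ?]].
  have [bdU disjU] := famU i Pi; split; first exact: uniformly_bounded_sub bdU.
  by apply: r_disjoint_le (r_disjoint_sub sUi disjU); apply/le_INR/leP/le_r'.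
- have [A [[i [Pi UiA]] Ax]] := covU x.
  by exists A; split=> //; exists (f i); split; [exists i | exists i].
Qed.

Lemma bounded_space_cover r :
  bounded_space d ->
  disjoint_cover (fun i => (i < 1)%N) r (fun _ A => A = fun _ => True).
Proof.
move=> [C bdX]; split=> [i _|x].
- split; last by move=> A1 A2 -> -> [].
  exists (Rmax R1 C); split; first exact: Rlt_le_trans Rlt_0_1 (Rmax_l R1 C).
  by move=> A _ x y _ _; apply: Rle_trans (bdX x y) (Rmax_r R1 C).
- by exists (fun _ => True); split=> //; exists 0%N.
Qed.

End DisjointCovers.

Definition fset_prefix (s : nat -> nat) (n : nat) : {fset nat} :=
  [fset s i | i in iota 0 n].

Lemma fset_prefixP s n x :
  reflect (exists2 i, (i < n)%N & s i = x) (x \in fset_prefix s n).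
Proof.
apply: (iffP idP) => [/imfsetP [i /= + ->]|[i lt_in <-]].
  by rewrite mem_iota; exists i.
by apply/imfsetP; exists i; rewrite //= mem_iota.
Qed.

Lemma fset_prefix0 s : fset_prefix s 0 = fset0.
Proof. by apply/fsetP => x; rewrite in_fset0; apply/fset_prefixP => -[]. Qed.

Lemma fset_prefixSr s n : fset_prefix s n.+1 = fset_prefix s n `|` [fset s n].
Proof.
apply/fsetP => x; rewrite in_fsetU in_fset1.
apply/fset_prefixP/orP => [[i]|[/fset_prefixP [i lt_in <-]|/eqP ->]].
- rewrite ltnS leq_eqVlt => /orP [/eqP -> <-|lt_in <-]; first by right.
  by left; apply/fset_prefixP; exists i.
- by exists i => //; apply: ltnW.
- by exists n.
Qed.

Lemma fset_prefixS s n :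
  fset_prefix s n.+1 = s 0%N |` fset_prefix (fun i => s i.+1) n.
Proof.
apply/fsetP => x; rewrite in_fset1U.
apply/fset_prefixP/orP => [[[|i] lt_in <-]|[/eqP ->|/fset_prefixP [i lt_in <-]]].
- by left.
- by right; apply/fset_prefixP; exists i.
- by exists 0%N.
- by exists i.+1.
Qed.

Lemma FinN_fset_prefix s n :
  (forall i, inL (s i)) -> (0 < n)%N -> FinN (fset_prefix s n).
Proof.
move=> s_pos n_gt0; split=> [|a /fset_prefixP [i _ <-] //].
apply/eqP => /fsetP /(_ (s 0%N)); rewrite in_fset0 => /fset_prefixP.
by apply; exists 0%N.
Qed.

Lemma increasing_inL (s : nat -> nat) :
  (0 < s 0)%N -> (forall i, (s i < s i.+1)%N) -> forall i, inL (s i).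
Proof.
by move=> s0_gt0 s_incr [|i] //; apply: leq_ltn_trans (leq0n _) (s_incr i).
Qed.

Lemma fset1I_eq0 (a : nat) (A : {fset nat}) :
  [fset a] `&` A = fset0 <-> a \notin A.
Proof. by rewrite -fdisjoint1X; apply: (rwP eqP). Qed.

Lemma ord_finite_prefix M :
  ord_finite M -> forall s, (0 < s 0)%N -> (forall i, (s i < s i.+1)%N) ->
  exists2 n, (0 < n)%N & ~ M (fset_prefix s n).
Proof.
elim=> {M} [M M0|M _ IH] s s0_gt0 s_incr; first by exists 1%N => //; apply: M0.
have s_pos := increasing_inL s0_gt0 s_incr.
have [n n_gt0 nM] :=
  IH (s 0%N) s0_gt0 (fun i => s i.+1) (s_pos 1%N) (fun i => s_incr i.+1).
exists n.+1 => // Ms; apply: nM; split; first exact: FinN_fset_prefix.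
rewrite -fset_prefixS; split=> //.
apply/fset1I_eq0/fset_prefixP => -[i _ s0_eq].
by have := homo_ltn ltn_trans s_incr (ltn0Sn i); rewrite s0_eq ltnn.
Qed.

Fixpoint Mpt_chain (M : {fset nat} -> Prop) (a : nat -> nat) (k : nat) :
    {fset nat} -> Prop :=
  if k is k'.+1 then Mpt (Mpt_chain M a k') (a k') else M.

Lemma Mpt_chainP M a k tau : Mpt_chain M a k tau ->
  M (fset_prefix a k `|` tau) /\ forall j, (j < k)%N -> a j \notin tau.
Proof.
elim: k tau => [|k IH] tau /=; first by rewrite fset_prefix0 fset0U.
move=> [_ [/IH [M_tau a_notin] /fset1I_eq0 ak_notin]].
split; first by rewrite fset_prefixSr -fsetUA.
move=> j; rewrite ltnS leq_eqVlt => /orP [/eqP -> //|lt_jk].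
by apply: contra (a_notin j lt_jk); rewrite in_fsetU => ->; rewrite orbT.
Qed.

Lemma Mpt_chain_inj M a :
  (forall k, exists tau, Mpt_chain M a k tau) -> injective a.
Proof.
move=> chain_ne; have neq_lt i j : (i < j)%N -> a i <> a j.
  move=> lt_ij; have [tau [_ [/Mpt_chainP [_ a_notin] _]]] := chain_ne j.+1.
  by move=> aij; move: (a_notin i lt_ij); rewrite aij in_fsetU in_fset1 eqxx.
move=> i j aij; case: (ltngtP i j) => // [lt_ij|lt_ji].
- by case: (neq_lt _ _ lt_ij).
- by case: (neq_lt _ _ lt_ji (esym aij)).
Qed.

Lemma not_ord_finite_nonempty M : ~ ord_finite M -> exists tau, M tau.
Proof.
move=> nfM; apply: NNPP => M0; apply: nfM; apply: ord_finite_empty => tau M_tau.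
by apply: M0; exists tau.
Qed.

Lemma not_ord_finite_Mpt M :
  ~ ord_finite M -> exists a, inL a /\ ~ ord_finite (Mpt M a).
Proof.
move=> nfM; apply: NNPP => fin_Mpt; apply: nfM; apply: ord_finite_step => a a_pos.
by apply: NNPP => nf_Ma; apply: fin_Mpt; exists a.
Qed.

Lemma not_ord_finite_chain M : ~ ord_finite M ->
  exists a, forall k, inL (a k) /\ ~ ord_finite (Mpt_chain M a k).
Proof.
move=> nfM.
pose next N := epsilon (inhabits 0%N) (fun a => inL a /\ ~ ord_finite (Mpt N a)).
have nextP N : ~ ord_finite N -> inL (next N) /\ ~ ord_finite (Mpt N (next N)).
  by move=> /not_ord_finite_Mpt; apply: epsilon_spec.
pose chain k := iter k (fun N => Mpt N (next N)) M.
have nf_chain k : ~ ord_finite (chain k).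
  by elim: k => [//|k IH]; apply: (nextP _ IH).2.
exists (fun k => next (chain k)).
have chainE k : Mpt_chain M (fun k => next (chain k)) k = chain k.
  by elim: k => //= k ->.
move=> k; rewrite chainE; split; last exact: nf_chain.
exact: (nextP _ (nf_chain k)).1.
Qed.

Lemma leq_partial_sum (a : nat -> nat) k : (a k <= \sum_(j < k.+1) a j)%N.
Proof. by rewrite big_ord_recr /= leq_addl. Qed.

Lemma partial_sum_increasing (a : nat -> nat) k :
  (0 < a k.+1)%N -> (\sum_(j < k.+1) a j < \sum_(j < k.+2) a j)%N.
Proof.
by move=> a_pos; rewrite (big_ord_recr k.+1) /= -[X in (X < _)%N]addn0 ltn_add2l.
Qed.

Section PropertyC.
Variables (X : Type) (d : X -> X -> R).

Lemma bounded_space_property_C : bounded_space d -> asymptotic_property_C d.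
Proof.
move=> bdX s _ _; exists 1%N, (fun _ A => A = fun _ => True).
exact: bounded_space_cover.
Qed.

Lemma ord_finite_property_C : ord_finite (Aset d) -> asymptotic_property_C d.
Proof.
move=> finA s s0_gt0 s_incr.
have [n n_gt0 nA] := ord_finite_prefix finA s0_gt0 s_incr.
have [V coverV] : exists V, disjoint_cover d (fun i => i \in fset_prefix s n) id V.
  apply: NNPP => noV; apply: nA; split=> //.
  exact: FinN_fset_prefix (increasing_inL s0_gt0 s_incr) n_gt0.
exists n, (fun i => V (s i)).
apply: disjoint_cover_comap coverV => [i lt_in|j /fset_prefixP //|//].
by apply/fset_prefixP; exists i.
Qed.

Lemma property_C_ord_finite : asymptotic_property_C d -> ord_finite (Aset d).
Proof.
move=> propC; apply: NNPP => /not_ord_finite_chain [a chain_a].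
have a_pos k : (0 < a k)%N := (chain_a k).1.
have a_inj : injective a.
  by apply: Mpt_chain_inj => k; apply: not_ord_finite_nonempty (chain_a k).2.
have [n [U coverU]] := propC (fun k => \sum_(j < k.+1) a j)
  (leq_trans (a_pos 0%N) (leq_partial_sum a 0))
  (fun k => partial_sum_increasing (a_pos k.+1)).
have [tau /Mpt_chainP [[_ not_cover] _]] := not_ord_finite_nonempty (chain_a n).2.
apply: not_cover; eexists.
apply: disjoint_cover_widen (disjoint_cover_map (r' := id) a_inj _ coverU).
- by move=> j /fset_prefixP in_pre; rewrite in_fsetU in_pre.
- by move=> i _; apply: leq_partial_sum.
Qed.

End PropertyC.

Theorem proposition1 (X : Type) (d : X -> X -> R) (Hd : is_metric d) :
  asymptotic_property_C d <-> trasdim_finite d.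
Proof.
split=> [propC|[bdX|finA]].
- by right; apply: property_C_ord_finite.
- exact: bounded_space_property_C.
- exact: ord_finite_property_C.
Qed.
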